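(* Suppose $f(x)=x^m\pm1$, and let $G=(g_{ij})$ be a $k\times l$ matrix over $A$ whose rows $g^{(1)},\ldots,g^{(k)}$ form a basis of divisors of an $A$-code $C$. For each $i$ let $d_i=\deg L_{\mathrm{coef}}(g^{(i)})$ and let $\alpha_i$ be the constant coefficient of $L_{\mathrm{coef}}(g^{(i)})$. Let $G'$ be the $k\times l$ matrix with entries $\alpha_i^{-1}x^{d_i}g_{ij}(x^{-1})$ (computed in $A$, where $x$ is invertible). Then the rows of $G'$ form a basis of divisors of the $A$-code $(C^\perp)^{\perp_{\mathbb{F}}}$.
   Context: Let $\mathbb{F}$ be a finite field, $f(x)\in\mathbb{F}[x]$ monic of degree $m$, $A=\mathbb{F}[x]/\langle f(x)\rangle$, elements identified with polynomials of degree $<m$. An $A$-code of length $l$ is an $A$-submodule of $A^l$; $C^\perp=\{a\in A^l:\sum_ia_ic_i=0\ \forall c\in C\}$. Identify $\sum_{i=0}^{m-1}a_ix^i\in A$ with $(a_0,\ldots,a_{m-1})\in\mathbb{F}^m$ and $A^l$ with $\mathbb{F}^{lm}$ by concatenation; $D^{\perp_{\mathbb{F}}}$ is the dual of $D$ with respect to the standard dot product on $\mathbb{F}^{lm}$, viewed in $A^l$. For $u\in A^l$, $L_{\mathrm{ind}}(u)$ is the smallest index of a nonzero entry ($\infty$ if $u=0$) and $L_{\mathrm{coef}}(u)$ that entry. For nonzero $C$, $L_{\mathrm{ind}}(C)=\min_{u\in C}L_{\mathrm{ind}}(u)$; $L_{\mathrm{coef}}(C)$ is the monic polynomial $g$ of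 minimum degree such that some $c\in C$ has $L_{\mathrm{ind}}(c)=L_{\mathrm{ind}}(C)$ and $L_{\mathrm{coef}}(c)=g$ (such $c$ is a leading element). $C^{(1)}=C$, $C^{(n+1)}=\{c\in C^{(n)}:L_{\mathrm{ind}}(c)>L_{\mathrm{ind}}(C^{(n)})\}$ while $C^{(n)}\ne0$; with $k$ largest such that $C^{(k)}\neq0$, a tuple $(g^{(1)},\ldots,g^{(k)})$ with $g^{(j)}$ a leading element of $C^{(j)}$ is a basis of divisors of $C$. *)

From HB Require Import structures.
From mathcomp Require Import all_boot all_order all_algebra.
Set Implicit Arguments. Unset Strict Implicit. Unset Printing Implicit Defensive.
Import Order.TTheory GRing.Theory Num.Theory.
Local Open Scope ring_scope.

(* An element of A = F[x]/<f> is its coefficient vector (a_0,...,a_{m-1})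
   : 'rV[F]_m.  An element of A^l is an l x m matrix over F whose i-th row is
   the i-th entry (so A^l = F^{lm} by concatenation of the rows).
   Indices of entries are 0-based: index i : 'I_l; "infinity" is encoded by l. *)

Section Defs.
Variables (F : finFieldType) (m l : nat) (eps : F).

Definition fpoly : {poly F} := 'X^m + eps%:P.

Definition toP (a : 'rV[F]_m) : {poly F} := rVpoly a.
Definition ofP (p : {poly F}) : 'rV[F]_m := poly_rV (p %% fpoly).

Definition mulA (a b : 'rV[F]_m) : 'rV[F]_m := ofP (toP a * toP b).

Definition scaleA (a : 'rV[F]_m) (u : 'M[F]_(l, m)) : 'M[F]_(l, m) :=
  \matrix_(i < l) mulA a (row i u).

Definition is_Acode (C : {set 'M[F]_(l, m)}) : Prop :=
  [/\ 0 \in C,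
      (forall u v, u \in C -> v \in C -> u + v \in C) &
      (forall a u, u \in C -> scaleA a u \in C)].

Definition formA (a c : 'M[F]_(l, m)) : 'rV[F]_m :=
  \sum_(i < l) mulA (row i a) (row i c).
Definition dualA (C : {set 'M[F]_(l, m)}) : {set 'M[F]_(l, m)} :=
  [set a | [forall c in C, formA a c == 0]].

Definition dotF (u v : 'M[F]_(l, m)) : F := \sum_(i < l) \sum_(j < m) u i j * v i j.
Definition dualF (D : {set 'M[F]_(l, m)}) : {set 'M[F]_(l, m)} :=
  [set v | [forall u in D, dotF u v == 0]].

(* L_ind(u): smallest index of a nonzero entry, l (= infinity) if u = 0 *)
Definition Lind (u : 'M[F]_(l, m)) : nat :=
  find (fun i : 'I_l => row i u != 0) (enum 'I_l).
Definition Lcoef (u : 'M[F]_(l, m)) : {poly F} :=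
  toP (nth 0 [seq row i u | i <- enum 'I_l] (Lind u)).

Definition LindS (C : {set 'M[F]_(l, m)}) : nat := \big[minn/l]_(c in C) Lind c.

Definition nonzero_set (C : {set 'M[F]_(l, m)}) : bool := [exists c in C, c != 0].

Definition is_leading (C : {set 'M[F]_(l, m)}) (c : 'M[F]_(l, m)) : Prop :=
  [/\ c \in C, Lind c = LindS C, Lcoef c \is monic &
      forall c', c' \in C -> Lind c' = LindS C -> Lcoef c' \is monic ->
        (size (Lcoef c) <= size (Lcoef c'))%N].

(* Csub C n = C^{(n+1)} of the paper (0-based) *)
Fixpoint Csub (C : {set 'M[F]_(l, m)}) (n : nat) : {set 'M[F]_(l, m)} :=
  if n is n'.+1 then [set c in Csub C n' | (LindS (Csub C n') < Lind c)%N]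
  else C.

(* (G 0, ..., G (k-1)) is a basis of divisors of C (G j = g^{(j+1)}) *)
Definition basis_of_divisors (C : {set 'M[F]_(l, m)}) (k : nat)
  (G : 'I_k -> 'M[F]_(l, m)) : Prop :=
  [/\ (forall n, (n < k)%N -> nonzero_set (Csub C n)),
      (forall n, (k <= n)%N -> ~~ nonzero_set (Csub C n)) &
      forall j : 'I_k, is_leading (Csub C j) (G j)].

(* x^{-1} in A:  x^m = -eps, so x^{-1} = -eps x^{m-1} (eps^2 = 1) *)
Definition xinvP : {poly F} := (- eps) *: 'X^(m.-1).

(* the transformed matrix G': entry (i,j) = alpha_i^{-1} x^{d_i} g_ij(x^{-1}) in A,
   d_i = deg L_coef(g^(i)), alpha_i = constant coefficient of L_coef(g^(i)).
   g(x^{-1}) is computed as the composition g \Po xinvP reduced mod f. *)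
Definition reciprocal_basis (k : nat) (G : 'I_k -> 'M[F]_(l, m)) : 'I_k -> 'M[F]_(l, m) :=
  fun i => \matrix_(j < l)
    let g := Lcoef (G i) in
    ofP (((g`_0)^-1) *: ('X^((size g).-1) * (toP (row j (G i)) \Po xinvP))).

End Defs.

(* Over A = F[x]/<x^m + eps> with eps^2 = 1, x is a unit and a(x) |-> a(x^-1) is an
   involutive ring automorphism sigma of A; its row-wise extension to A^l is [star].
   The constant coefficient of a * b is the dot product of a with sigma b, hence
   C^perp = (star C)^perp_F and (C^perp)^perp_F = star C.  As [star] preserves
   leading indices, it maps the chain C^(n) onto the chain of star C.
   If g is a leading element of C whose leading coefficient q has degree d, then
   x^d star(g) lies in star C with leading coefficient the reversal of q.  Reversing
   twice would strictly lower the degree if q(0) = 0, so minimality of d forces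
   q(0) <> 0; then q(0)^-1 x^d star(g) is monic of degree d, and it is minimal in
   star C because reversing a competitor back into C does not raise its degree. *)

From Pilot Require Import Defs.
From HB Require Import structures.
From mathcomp Require Import all_boot all_order all_algebra.
From mathcomp Require Import zify.
Set Implicit Arguments. Unset Strict Implicit. Unset Printing Implicit Defensive.
Import Order.TTheory GRing.Theory.
Local Open Scope ring_scope.

Section DoubleDual.
Variables (F : finFieldType) (m l : nat).
Local Notation M := 'M[F]_(l, m).

Lemma dotF_mxvec (u v : M) : dotF u v = (mxvec u *m (mxvec v)^T) 0 0.
Proof.
rewrite mxE (reindex _ (curry_mxvec_bij _ _)) /= /dotF pair_big /=.
by apply: eq_bigr => [[i j]] _; rewrite /= mxE !mxvecE.
Qed.

Lemma dotFC (u v : M) : dotF u v = dotF v u.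
Proof. by apply: eq_bigr => i _; apply: eq_bigr => j _; rewrite mulrC. Qed.

Lemma dualF_dualF (S : {set M}) : 0 \in S ->
  (forall u v, u \in S -> v \in S -> u + v \in S) ->
  (forall (x : F) u, u \in S -> x *: u \in S) -> dualF (dualF S) = S.
Proof.
(* S is the row space of B and dualF S is spanned by the rows of K = ker B^T, so by
   rank-nullity the kernel of K^T, which contains B and the double dual, equals B. *)
move=> S0 SD SZ; set s := enum S.
pose B : 'M[F]_(size s, l * m) := \matrix_(i < size s) mxvec (nth 0 s i).
have row_B u : u \in S -> exists i, mxvec u = row i B.
  move=> uS; have ui : (index u s < size s)%N by rewrite index_mem mem_enum.
  by exists (Ordinal ui); rewrite rowK nth_index // mem_enum.
have sub_B (x : 'rV[F]_(l * m)) : (x <= B)%MS -> vec_mx x \in S.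
  case/submxP => D ->; rewrite mulmx_sum_row linear_sum /=.
  apply: (big_ind (fun x => x \in S)) => //= i _.
  by rewrite linearZ /= rowK mxvecK SZ // -mem_enum mem_nth.
pose K := kermx B^T.
have BK : B *m K^T = 0 by rewrite -[B]trmxK -trmx_mul mulmx_ker trmx0.
apply/setP => w; apply/idP/idP; last first.
  move=> wS; rewrite inE; apply/forallP => v; apply/implyP; rewrite inE.
  by move/forallP/(_ w)/implyP/(_ wS); rewrite dotFC.
rewrite inE => /forallP w_dual.
have K_dual r : vec_mx (row r K) \in dualF S.
  rewrite inE; apply/forallP => u; apply/implyP => /row_B [i ui].
  rewrite dotF_mxvec ui vec_mxK; apply/eqP.
  have := congr1 (fun X : 'M_(_, _) => X i r) BK; rewrite !mxE => BKir.
  by rewrite -[RHS]BKir; apply: eq_bigr => k _; rewrite !mxE.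
have wK : (mxvec w <= kermx K^T)%MS.
  rewrite sub_kermx; apply/eqP/rowP => r; rewrite !mxE.
  have := w_dual (vec_mx (row r K)); rewrite K_dual /= dotF_mxvec vec_mxK => /eqP wKr.
  by rewrite -[RHS]wKr mxE; apply: eq_bigr => k _; rewrite !mxE mulrC.
have sBK : (B <= kermx K^T)%MS by rewrite sub_kermx BK.
have rkK : \rank (kermx K^T) = \rank B.
  by rewrite mxrank_ker mxrank_tr mxrank_ker mxrank_tr subKn // rank_leq_col.
have := mxrank_leqif_eq sBK; rewrite rkK => /leqif_refl /andP [_ KB].
by rewrite -[w]mxvecK sub_B // (submx_trans wK).
Qed.

End DoubleDual.

Section LeadingIndex.
Variables (F : finFieldType) (m l : nat).
Local Notation M := 'M[F]_(l, m).
Implicit Types (u v : M) (S : {set M}) (phi : 'rV[F]_m -> 'rV[F]_m).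

Definition rowmap phi u : M := \matrix_(i < l) phi (row i u).

Definition Lrow u : 'rV[F]_m := nth 0 [seq row i u | i <- enum 'I_l] (Lind u).

Lemma row_rowmap phi u i : row i (rowmap phi u) = phi (row i u).
Proof. exact: rowK. Qed.

Lemma Lcoef_Lrow u : Lcoef u = toP (Lrow u).
Proof. by []. Qed.

Lemma Lind_mono u v : (forall i, row i u = 0 -> row i v = 0) -> (Lind u <= Lind v)%N.
Proof. by move=> uv; apply: sub_find => i; apply: contra_neq; apply: uv. Qed.

Lemma Lind_rowmap phi u : (forall a, (phi a == 0) = (a == 0)) ->
  Lind (rowmap phi u) = Lind u.
Proof. by move=> phi_eq0; apply: eq_find => i; rewrite /= row_rowmap phi_eq0. Qed.

Lemma Lcoef_rowmap phi u : (forall a, (phi a == 0) = (a == 0)) ->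
  Lcoef (rowmap phi u) = toP (phi (Lrow u)).
Proof.
move=> phi_eq0; rewrite /Lcoef /Lrow Lind_rowmap //; congr toP.
have phi0 : phi 0 = 0 by apply/eqP; rewrite phi_eq0.
rewrite (eq_map (fun i => row_rowmap phi u i)) (map_comp phi).
set s := [seq row i u | i <- enum 'I_l].
have [lt_size | le_size] := ltnP (Lind u) (size s); first by rewrite (nth_map 0).
by rewrite (nth_default 0 le_size) (nth_default 0) ?phi0 // size_map.
Qed.

Lemma LindS_le S u : u \in S -> (LindS S <= Lind u)%N.
Proof.
by move=> uS; have := @bigmin_le_cond _ nat _ l u (mem S) (@Lind F m l) uS; rewrite minEnat.
Qed.

Lemma LindS_geP S n :
  reflect ((n <= l)%N /\ forall u, u \in S -> (n <= Lind u)%N) (n <= LindS S)%N.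
Proof. by have := @bigmin_geP _ nat _ l n (mem S) (@Lind F m l); rewrite minEnat. Qed.

End LeadingIndex.

Section Reversal.
Variable R : nzRingType.
Implicit Types p : {poly R}.

Definition revp p : {poly R} := \poly_(i < size p) p`_((size p).-1 - i).

Lemma size_revp_le p : (size (revp p) <= size p)%N.
Proof. exact: size_poly. Qed.

Lemma coef0_revp p : (revp p)`_0 = lead_coef p.
Proof.
rewrite /revp coef_poly subn0 lead_coefE.
by case: ifP => // /negbT; rewrite -leqNgt leqn0 size_poly_eq0 => /eqP ->; rewrite coef0.
Qed.

Lemma revp_eq0 p : (revp p == 0) = (p == 0).
Proof.
apply/eqP/eqP => [p0|->]; last by rewrite /revp size_poly0 poly_def big_ord0.
by apply/eqP; rewrite -lead_coef_eq0 -coef0_revp p0 coef0.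
Qed.

Lemma size_revp p : p`_0 != 0 -> size (revp p) = size p.
Proof. by move=> p00; rewrite /revp size_poly_eq // subnn. Qed.

Lemma lead_coef_revp p : p`_0 != 0 -> lead_coef (revp p) = p`_0.
Proof.
move=> p00; have size_gt0 : (0 < size p)%N.
  by rewrite lt0n size_poly_eq0; apply: contra_neq p00 => ->; rewrite coef0.
by rewrite lead_coefE size_revp // /revp coef_poly prednK // leqnn subnn.
Qed.

Lemma size_revp_lt p : p != 0 -> p`_0 = 0 -> (size (revp p) < size p)%N.
Proof.
move=> p0 p00; rewrite -(prednK (_ : 0 < size p)%N) ?size_poly_gt0 // ltnS.
apply/leq_sizeP => j le_j; rewrite /revp coef_poly.
by case: ifP => // lt_j; have -> : ((size p).-1 - j = 0)%N by lia.
Qed.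

End Reversal.

Section QuotientRing.
Variables (F : finFieldType) (m : nat) (eps : F).
Hypotheses (m_gt0 : (0 < m)%N) (eps2 : eps * eps = 1).
Implicit Types (p q : {poly F}) (a b : 'rV[F]_m).
Local Notation f := (fpoly m eps).
Local Notation xinv := (xinvP m eps).
Local Notation ofP := (ofP m eps).
Local Notation mulA := (Defs.mulA eps).

Lemma size_fpoly : size f = m.+1.
Proof. exact: size_XnaddC. Qed.

Lemma monic_fpoly : f \is monic.
Proof. exact: monicXnaddC. Qed.

Lemma modf_small p : (size p <= m)%N -> p %% f = p.
Proof. by move=> le_p; rewrite modp_small // size_fpoly ltnS. Qed.

Lemma size_toP a : (size (toP a) <= m)%N.
Proof. exact: size_poly. Qed.

Lemma toP_ofP p : toP (ofP p) = p %% f.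
Proof.
rewrite /toP /Defs.ofP poly_rV_K //.
by have := ltn_modpN0 p (monic_neq0 monic_fpoly); rewrite size_fpoly ltnS.
Qed.

Lemma toP_inj : injective (@toP F m).
Proof. exact: can_inj (@rVpolyK _ _). Qed.

Lemma ofP_mod p : ofP (p %% f) = ofP p.
Proof. by rewrite /Defs.ofP modp_id. Qed.

Lemma ofPD p q : ofP (p + q) = ofP p + ofP q.
Proof. by rewrite /Defs.ofP modpD linearD. Qed.

Lemma ofPZ (c : F) p : ofP (c *: p) = c *: ofP p.
Proof. by rewrite /Defs.ofP modpZl linearZ. Qed.

Lemma toPD a b : toP (a + b) = toP a + toP b.
Proof. exact: linearD. Qed.

Lemma toPZ (c : F) a : toP (c *: a) = c *: toP a.
Proof. exact: linearZ. Qed.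

Lemma toP0 : toP (0 : 'rV[F]_m) = 0.
Proof. exact: linear0. Qed.

Lemma toP_mulA a b : toP (mulA a b) = (toP a * toP b) %% f.
Proof. exact: toP_ofP. Qed.

Lemma ofPM p q : ofP (p * q) = mulA (ofP p) (ofP q).
Proof.
apply: toP_inj; rewrite toP_mulA !toP_ofP modp_mul [(p %% f) * _]mulrC modp_mul.
by rewrite mulrC.
Qed.

Lemma ofP_toP a : ofP (toP a) = a.
Proof. by apply: toP_inj; rewrite toP_ofP modf_small ?size_toP. Qed.

Lemma mulAC a b : mulA a b = mulA b a.
Proof. by rewrite /Defs.mulA mulrC. Qed.

Lemma mulAA a b (c : 'rV[F]_m) : mulA a (mulA b c) = mulA (mulA a b) c.
Proof. by rewrite -[a]ofP_toP -[b]ofP_toP -[c]ofP_toP -!ofPM mulrA. Qed.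

Lemma mulADl a b (c : 'rV[F]_m) : mulA (a + b) c = mulA a c + mulA b c.
Proof. by rewrite /Defs.mulA toPD mulrDl ofPD. Qed.

Lemma mulA0 a : mulA a 0 = 0.
Proof. by apply: toP_inj; rewrite toP_mulA toP0 mulr0 mod0p. Qed.

Lemma mulA_polyC (c : F) a : mulA (ofP c%:P) a = c *: a.
Proof. by rewrite -[a]ofP_toP -ofPM mul_polyC ofPZ. Qed.

Lemma modf_sum (I : Type) (r : seq I) (P : pred I) (E : I -> {poly F}) :
  (\sum_(i <- r | P i) E i) %% f = \sum_(i <- r | P i) (E i %% f).
Proof. exact: (big_morph (fun p => p %% f) (fun p q => modpD f p q) (mod0p f)). Qed.

Lemma modfX p k : ((p %% f) ^+ k) %% f = (p ^+ k) %% f.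
Proof.
rewrite !(@Pdiv.IdomainMonic.modpE _ f monic_fpoly).
exact: Pdiv.RingMonic.rmodpX monic_fpoly _ _.
Qed.

Lemma modf_compr p q : (p \Po (q %% f)) %% f = (p \Po q) %% f.
Proof.
rewrite !(@Pdiv.IdomainMonic.modpE _ f monic_fpoly).
exact: Pdiv.RingMonic.rmodp_compr monic_fpoly _ _.
Qed.

Lemma modf_Xm : ((- eps) *: 'X^m) %% f = 1.
Proof.
rewrite -(modp_addl_mul_small (d := f) (- eps)%:P (r := 1)) ?size_poly1 ?size_fpoly //.
by rewrite /fpoly mulrDr mul_polyC -polyCM mulNr eps2 polyCN -addrA addNr addr0.
Qed.

Lemma modfXn_eq1 (k : nat) : ('X^k * xinv ^+ k) %% f = 1.
Proof.
have mulX_xinv : ('X * xinv) %% f = 1 by rewrite -scalerAr -exprS prednK // modf_Xm.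
by rewrite -exprMn -modfX mulX_xinv expr1n modf_small ?size_poly1.
Qed.

Lemma modf_inv_uniq p u v : (p * u) %% f = 1 -> (p * v) %% f = 1 -> u %% f = v %% f.
Proof.
move=> pu pv; rewrite -[u]mulr1 -pv modp_mul mulrA [u * p]mulrC [_ * v]mulrC.
by rewrite -modp_mul pu mulr1.
Qed.

Lemma modf_xinvX (k : nat) : (0 < k <= m)%N -> (xinv ^+ k) %% f = (- eps) *: 'X^(m - k).
Proof.
case/andP=> k_gt0 le_k; rewrite -[RHS]modf_small; last first.
  by rewrite (leq_trans (size_scale_leq _ _)) // size_polyXn; lia.
apply: (@modf_inv_uniq 'X^k); first exact: modfXn_eq1.
by rewrite -scalerAr -exprD subnKC // modf_Xm.
Qed.

Lemma modf_xinvXm : (xinv ^+ m) %% f = (- eps)%:P.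
Proof. by rewrite modf_xinvX ?m_gt0 ?leqnn // subnn expr0 alg_polyC. Qed.

Lemma modf_comp_xinv p : ((p %% f) \Po xinv) %% f = (p \Po xinv) %% f.
Proof.
have f_xinv : (f \Po xinv) %% f = 0.
  rewrite /fpoly comp_polyD comp_polyC rmorphXn /= comp_polyX modpD.
  by rewrite modf_xinvXm modf_small ?(leq_trans (size_polyC_leq1 _)) // -polyCD addNr.
rewrite [in RHS](divp_eq p f) comp_polyD comp_polyM modpD -modp_mul f_xinv.
by rewrite mulr0 mod0p add0r.
Qed.

Lemma modf_xinv_xinv : (xinv \Po xinv) %% f = 'X %% f.
Proof.
apply: (@modf_inv_uniq xinv); last by rewrite mulrC; exact: (modfXn_eq1 1).
rewrite {1}/xinvP comp_polyZ rmorphXn /= comp_polyX -scalerAr -exprS prednK //.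
by rewrite modpZl modf_xinvXm -mul_polyC -polyCM mulrNN eps2.
Qed.

Definition sigma a : 'rV[F]_m := ofP (toP a \Po xinv).

Lemma toP_sigma a : toP (sigma a) = (toP a \Po xinv) %% f.
Proof. exact: toP_ofP. Qed.

Lemma sigmaM a b : sigma (mulA a b) = mulA (sigma a) (sigma b).
Proof. by rewrite /sigma toP_mulA -ofP_mod modf_comp_xinv ofP_mod comp_polyM ofPM. Qed.

Lemma sigmaK : involutive sigma.
Proof.
move=> a; apply: toP_inj; rewrite !toP_sigma modf_comp_xinv -comp_polyA.
by rewrite -modf_compr modf_xinv_xinv modf_compr comp_polyXr modf_small ?size_toP.
Qed.

Lemma sigma_inj : injective sigma.
Proof. exact: inv_inj sigmaK. Qed.

Lemma sigmaD a b : sigma (a + b) = sigma a + sigma b.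
Proof. by rewrite /sigma toPD comp_polyD ofPD. Qed.

Lemma sigmaZ (c : F) a : sigma (c *: a) = c *: sigma a.
Proof. by rewrite /sigma toPZ comp_polyZ ofPZ. Qed.

Lemma sigma0 : sigma 0 = 0.
Proof. by rewrite /sigma toP0 comp_poly0 /Defs.ofP mod0p linear0. Qed.

Lemma sigma_eq0 a : (sigma a == 0) = (a == 0).
Proof. by rewrite -{1}sigma0 (inj_eq sigma_inj). Qed.

Lemma toP_sum_monomials a : toP a = \sum_(j < m) a 0 j *: 'X^j.
Proof.
rewrite {1}(row_sum_delta a) /toP linear_sum; apply: eq_bigr => j _.
by rewrite linearZ /= rVpoly_delta.
Qed.

Lemma modf_XmD (n : nat) : (n < m)%N -> 'X^(m + n) %% f = (- eps) *: 'X^n.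
Proof.
move=> lt_n; rewrite -(modp_addl_mul_small (d := f) 'X^n (r := (- eps) *: 'X^n)).
  by rewrite /fpoly mulrDr -exprD addnC [_ * eps%:P]mulrC mul_polyC scaleNr addrK.
by rewrite size_fpoly ltnS (leq_trans (size_scale_leq _ _)) // size_polyXn.
Qed.

(* Both sides are 1, -eps or 0 according as j + k is 0, m, or neither. *)
Lemma coef0_modf_XnXn (j k : nat) : (j < m)%N -> (k < m)%N ->
  (('X^j * 'X^k) %% f)`_0 = ((xinv ^+ k) %% f)`_j.
Proof.
move=> lt_j; case: k => [_|k lt_k].
  by rewrite mulr1 expr0 !modf_small ?size_poly1 ?size_polyXn // coefXn coef1 eq_sym.
rewrite modf_xinvX; last by lia.
rewrite coefZ coefXn -exprD; have [lt_jk | le_jk] := ltnP (j + k.+1) m.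
  rewrite modf_small ?size_polyXn // coefXn.
  have -> : (0 == j + k.+1)%N = false by lia.
  have -> : (j == m - k.+1)%N = false by lia.
  by rewrite /= mulr0n mulr0.
have -> : (j + k.+1 = m + (j + k.+1 - m))%N by lia.
rewrite modf_XmD; last by lia.
by rewrite coefZ coefXn; have -> : (0 == j + k.+1 - m)%N = (j == m - k.+1)%N by lia.
Qed.

Lemma coef0_mulA a b : (toP (mulA a b))`_0 = \sum_(j < m) a 0 j * sigma b 0 j.
Proof.
rewrite toP_mulA (toP_sum_monomials a) (toP_sum_monomials b) mulr_suml modf_sum coef_sum.
apply: eq_bigr => j _; rewrite -[sigma b 0 j]coef_rVpoly_ord -/(toP _) toP_sigma.
rewrite (toP_sum_monomials b) linear_sum mulr_sumr !modf_sum !coef_sum mulr_sumr.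
apply: eq_bigr => k _; rewrite /= comp_polyZ rmorphXn /= comp_polyX modpZl coefZ.
rewrite -scalerAl -scalerAr scalerA modpZl coefZ coef0_modf_XnXn //.
by rewrite mulrA [a 0 j * _]mulrC.
Qed.

Lemma coef_toP (j : 'I_m) a : (toP a)`_j = (toP (mulA a (sigma (delta_mx 0 j))))`_0.
Proof.
rewrite coef0_mulA sigmaK coef_rVpoly_ord (bigD1 j) //= big1 ?addr0 => [|i /negbTE neq_ij].
  by rewrite mxE !eqxx mulr1.
by rewrite mxE neq_ij mulr0.
Qed.

Variable l : nat.
Local Notation M := 'M[F]_(l, m).
Local Notation scaleA := (@Defs.scaleA F m l eps).
Implicit Types (u v w : M) (X : {set M}).

Definition star u : M := rowmap sigma u.

Definition star_set X : {set M} := [set v | star v \in X].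

Definition scaleA_closed X := forall t w, w \in X -> scaleA t w \in X.

Lemma scaleAE t u : scaleA t u = rowmap (mulA t) u.
Proof. by []. Qed.

Lemma starK : involutive star.
Proof. by move=> u; apply/row_matrixP => i; rewrite !row_rowmap sigmaK. Qed.

Lemma star_inj : injective star.
Proof. exact: inv_inj starK. Qed.

Lemma starD u v : star (u + v) = star u + star v.
Proof. by apply/row_matrixP => i; rewrite linearD /= !row_rowmap linearD /= sigmaD. Qed.

Lemma starZ (x : F) u : star (x *: u) = x *: star u.
Proof. by apply/row_matrixP => i; rewrite linearZ /= !row_rowmap linearZ /= sigmaZ. Qed.

Lemma star_scaleA t u : star (scaleA t u) = scaleA (sigma t) (star u).
Proof. by apply/row_matrixP => i; rewrite !row_rowmap sigmaM. Qed.

Lemma star_eq0 u : (star u == 0) = (u == 0).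
Proof.
have star0 : star 0 = 0 by apply/row_matrixP => i; rewrite row_rowmap !row0 sigma0.
by rewrite -{1}star0 (inj_eq star_inj).
Qed.

Lemma Lind_star u : Lind (star u) = Lind u.
Proof. exact: Lind_rowmap sigma_eq0. Qed.

Lemma scaleA_polyC (x : F) u : scaleA (ofP x%:P) u = x *: u.
Proof. by apply/row_matrixP => i; rewrite row_rowmap mulA_polyC linearZ /=. Qed.

Lemma star_setK : involutive star_set.
Proof. by move=> X; apply/setP => u; rewrite !inE starK. Qed.

Lemma scaleA_closed_star_set X : scaleA_closed X -> scaleA_closed (star_set X).
Proof. by move=> HX t w; rewrite !inE star_scaleA; apply: HX. Qed.

Lemma formA_scaleA u t w : formA eps u (scaleA t w) = mulA (formA eps u w) t.
Proof.
have mul0A : mulA 0 t = 0 by rewrite mulAC mulA0.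
rewrite /formA (big_morph (mulA^~ t) (fun a b => mulADl a b t) mul0A).
by apply: eq_bigr => i _; rewrite scaleAE row_rowmap [mulA t _]mulAC mulAA.
Qed.

Lemma dotF_star u w : dotF (star w) u = (toP (formA eps u w))`_0.
Proof.
rewrite /formA /toP linear_sum coef_sum; apply: eq_bigr => i _.
rewrite -/(toP _) coef0_mulA; apply: eq_bigr => j _.
by rewrite -row_rowmap !mxE mulrC.
Qed.

Lemma dualA_star_set X : scaleA_closed X -> dualA eps X = dualF (star_set X).
Proof.
move=> HX; apply/setP => u; rewrite !inE; apply/forallP/forallP => u_dual v.
  apply/implyP; rewrite inE => vX; have /implyP/(_ vX)/eqP := u_dual (star v).
  by move=> fuv; rewrite -(starK v) dotF_star fuv toP0 coef0.
apply/implyP => vX; apply/eqP/toP_inj/polyP => j; rewrite toP0 coef0.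
have [lt_j | le_j] := ltnP j m; last by rewrite nth_default // (leq_trans (size_toP _)).
rewrite -[j]/(nat_of_ord (Ordinal lt_j)) coef_toP -formA_scaleA -dotF_star.
by have /implyP := u_dual (star (scaleA (sigma (delta_mx 0 (Ordinal lt_j))) v));
  rewrite inE starK HX // => /(_ isT)/eqP.
Qed.

Lemma dualF_dualA X : is_Acode eps X -> dualF (dualA eps X) = star_set X.
Proof.
case=> X0 XD XZ; rewrite dualA_star_set //; apply: dualF_dualF => [|u v|x u].
- by rewrite inE -(scale0r (0 : M)) starZ scale0r.
- by rewrite !inE starD; apply: XD.
- by rewrite !inE starZ -scaleA_polyC; apply: XZ.
Qed.

Lemma modf_revp p : (size p <= m)%N -> ('X^((size p).-1) * (p \Po xinv)) %% f = revp p.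
Proof.
move=> le_p; rewrite -[RHS]modf_small ?(leq_trans (size_revp_le p)) //.
rewrite comp_polyE mulr_sumr modf_sum /revp poly_def modf_sum.
rewrite [RHS](reindex_inj rev_ord_inj) /=; apply: eq_bigr => i _.
have lt_i := ltn_ord i; move: (nat_of_ord i) lt_i => k lt_k.
have -> : ((size p).-1 - (size p - k.+1) = k)%N by move: (size p) lt_k => n; lia.
rewrite -scalerAr !modpZl (_ : 'X^((size p).-1) = 'X^(size p - k.+1) * 'X^k); last first.
  by rewrite -exprD; congr (_ ^+ _); move: (size p) lt_k => n; lia.
by rewrite -mulrA -modp_mul modfXn_eq1 mulr1.
Qed.

Definition recipA (c : F) (d : nat) a : 'rV[F]_m := mulA (ofP (c *: 'X^d)) (sigma a).

Lemma toP_recipA c d a : toP (recipA c d a) = (c *: ('X^d * (toP a \Po xinv))) %% f.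
Proof.
rewrite toP_mulA toP_sigma toP_ofP modp_mul [(_ %% f) * _]mulrC modp_mul.
by rewrite mulrC scalerAl.
Qed.

Lemma recipA_eq0 c d a : c != 0 -> (recipA c d a == 0) = (a == 0).
Proof.
move=> c0; apply/eqP/eqP => [a_recip0 | ->]; last by rewrite /recipA sigma0 mulA0.
have inv_cXd : mulA (ofP (c^-1 *: xinv ^+ d)) (ofP (c *: 'X^d)) = ofP 1.
  rewrite -ofPM -scalerAl -scalerAr scalerA mulVf // scale1r mulrC.
  by rewrite -ofP_mod modfXn_eq1.
apply: sigma_inj; rewrite sigma0 -[sigma a]scale1r -mulA_polyC -inv_cXd -mulAA.
by rewrite -/(recipA c d a) a_recip0 mulA0.
Qed.

Definition recip (c : F) u : M := rowmap (recipA c (size (Lcoef u)).-1) u.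

Lemma recipE c u : recip c u = scaleA (ofP (c *: 'X^((size (Lcoef u)).-1))) (star u).
Proof. by apply/row_matrixP => i; rewrite scaleAE !row_rowmap. Qed.

Lemma Lind_recip c u : c != 0 -> Lind (recip c u) = Lind u.
Proof. by move=> c0; apply: Lind_rowmap => a; apply: recipA_eq0. Qed.

Lemma Lcoef_recip c u : c != 0 -> Lcoef (recip c u) = c *: revp (Lcoef u).
Proof.
move=> c0; rewrite Lcoef_rowmap => [|a]; last exact: recipA_eq0.
by rewrite toP_recipA -Lcoef_Lrow modpZl modf_revp // size_toP.
Qed.

Lemma recip_mem X c u : scaleA_closed X -> u \in star_set X -> recip c u \in X.
Proof. by rewrite inE recipE => HX; apply: HX. Qed.

Lemma LindS_star_set X : LindS (star_set X) = LindS X.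
Proof.
have lem X' : (LindS X' <= LindS (star_set X'))%N.
  apply/LindS_geP; split=> [|u]; first by case/LindS_geP: (leqnn (LindS X')).
  by rewrite inE -Lind_star; apply: LindS_le.
by apply/eqP; rewrite eqn_leq lem -{2}(star_setK X) lem.
Qed.

Lemma Csub_star_set X n : Csub (star_set X) n = star_set (Csub X n).
Proof.
elim: n => [|n IH] //=; apply/setP => u.
by rewrite IH LindS_star_set !inE Lind_star.
Qed.

Lemma nonzero_set_star_set X : nonzero_set (star_set X) = nonzero_set X.
Proof.
apply/existsP/existsP => [[u /andP [uX u0]] | [u /andP [uX u0]]].
  by rewrite inE in uX; exists (star u); rewrite uX star_eq0.
by exists (star u); rewrite inE starK uX star_eq0.
Qed.

Lemma Csub_scaleA_closed X n : scaleA_closed X -> scaleA_closed (Csub X n).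
Proof.
move=> HX; elim: n => [|n IH] //= t w; rewrite !inE => /andP [wX lt_w].
rewrite IH //= (leq_trans lt_w) // scaleAE; apply: Lind_mono => i.
by rewrite row_rowmap => ->; rewrite mulA0.
Qed.

Lemma leading_size_min X g u : scaleA_closed X -> is_leading X g ->
  u \in X -> Lind u = LindS X -> Lcoef u != 0 -> (size (Lcoef g) <= size (Lcoef u))%N.
Proof.
move=> HX [_ _ _ g_min] uX uL u0; set c := (lead_coef (Lcoef u))^-1.
have c0 : c != 0 by rewrite invr_eq0 lead_coef_eq0.
have scale_eq0 a : (c *: a == 0) = (a == 0) by rewrite scaler_eq0 (negbTE c0).
have cuX : rowmap ( *:%R c) u \in X.
  suff -> : rowmap ( *:%R c) u = scaleA (ofP c%:P) u by apply: HX.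
  by rewrite scaleA_polyC; apply/row_matrixP => i; rewrite row_rowmap linearZ.
have := g_min _ cuX; rewrite Lind_rowmap // Lcoef_rowmap // toPZ -Lcoef_Lrow.
rewrite size_scale // => -> //.
by rewrite monicE lead_coefZ mulVf // lead_coef_eq0.
Qed.

Lemma leading_coef0_neq0 X g : scaleA_closed X -> is_leading X g -> (Lcoef g)`_0 != 0.
Proof.
move=> HX g_lead; have [_ gL g_monic _] := g_lead; set q := Lcoef g.
have q0 : q != 0 := monic_neq0 g_monic.
(* Reversing twice lands back in X and strictly lowers the degree when q(0) = 0. *)
apply/eqP => q00; have u1 : (1 : F) != 0 := oner_neq0 F.
have uX : recip 1 (recip 1 g) \in X.
  apply: (recip_mem _ HX); apply: (recip_mem _ (scaleA_closed_star_set HX)).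
  by rewrite star_setK; case: g_lead.
have := leading_size_min HX g_lead uX.
rewrite !Lind_recip // !Lcoef_recip // !scale1r !revp_eq0 => /(_ gL q0) le_q.
have := leq_ltn_trans (leq_trans le_q (size_revp_le _)) (size_revp_lt q0 q00).
by rewrite ltnn.
Qed.

Lemma leading_recip X g : scaleA_closed X -> is_leading X g ->
  is_leading (star_set X) (recip ((Lcoef g)`_0)^-1 g).
Proof.
move=> HX g_lead; have [gX gL _ _] := g_lead.
have q00 := leading_coef0_neq0 HX g_lead.
have c0 : ((Lcoef g)`_0)^-1 != 0 by rewrite invr_eq0.
have u1 : (1 : F) != 0 := oner_neq0 F.
split.
- by apply: (recip_mem _ (scaleA_closed_star_set HX)); rewrite star_setK.
- by rewrite Lind_recip // LindS_star_set.
- by rewrite Lcoef_recip // monicE lead_coefZ lead_coef_revp // mulVf.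
move=> w wY wL w_monic; rewrite Lcoef_recip // size_scale // size_revp //.
apply: leq_trans (size_revp_le (Lcoef w)).
rewrite -[revp _]scale1r -Lcoef_recip //.
apply: leading_size_min g_lead _ _ _ => //.
- exact: recip_mem.
- by rewrite Lind_recip // wL LindS_star_set.
- by rewrite Lcoef_recip // scale1r revp_eq0 monic_neq0.
Qed.

Lemma reciprocal_basisE k (G : 'I_k -> M) i :
  reciprocal_basis eps G i = recip ((Lcoef (G i))`_0)^-1 (G i).
Proof.
apply/row_matrixP => j; rewrite row_rowmap rowK.
by apply: toP_inj; rewrite toP_ofP toP_recipA.
Qed.

End QuotientRing.

Theorem mainTheorem16 (F : finFieldType) (m l : nat) (eps : F)
  (Hm : (0 < m)%N) (Heps : eps = 1 \/ eps = -1)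
  (C : {set 'M[F]_(l, m)}) (HC : is_Acode eps C)
  (k : nat) (G : 'I_k -> 'M[F]_(l, m))
  (HG : basis_of_divisors C G) :
  basis_of_divisors (dualF (dualA eps C)) (reciprocal_basis eps G).
Proof.
have eps2 : eps * eps = 1 by case: Heps => ->; rewrite ?mulrNN mulr1.
have HCscale : scaleA_closed eps C by case: HC.
case: HG => C_nz C_z G_lead; rewrite dualF_dualA //.
split=> [n lt_n | n le_n | j]; rewrite Csub_star_set // ?nonzero_set_star_set //.
- exact: C_nz.
- exact: C_z.
rewrite reciprocal_basisE //; apply: leading_recip => //.
exact: Csub_scaleA_closed.
Qed.
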